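(* Let $(W,S)$ be a finite Coxeter system with Poincaré polynomial $P(q)=\sum_{w\in W}q^{\ell(w)}$ and identity $e$, and for $w\in W$ let $g_w(q)=\sum_{\chi\in\operatorname{Irr}(W)}\chi(w)\,d_\chi(q)$, where $d_\chi(q)$ are the generic degrees of $W$. Then $g_e(q)=P(q)$, and $g_s(q)=(1-q)P(q)/(1+q)$ for every $s\in S$.
   Context: Let $W$ be a finite Coxeter group with set of distinguished generators $S$, length function $\ell(\cdot)$, identity $e$, and set of irreducible complex characters $\operatorname{Irr}(W)$. Let $K\subseteq\mathbb{C}$ be a splitting field for $W$, $q$ an indeterminate, and $\mathcal{H}$ the Hecke algebra of $W$ over $K(\sqrt q)$ with basis $T_w$ ($w\in W$) and relations $T_s^2=qT_e+(q-1)T_s$ for $s\in S$, and $T_xT_y=T_{xy}$ whenever $\ell(x)+\ell(y)=\ell(xy)$. $\mathcal{H}$ is split semisimple; each irreducible character $\tilde\chi$ of $\mathcal{H}$ satisfies $\tilde\chi(T_w)\in K[\sqrt q]$, and specializing $\sqrt q\mapsto 1$ in $\tilde\chi(T_w)$ gives $\chi(w)$ for a unique $\chi\in\operatorname{Irr}(W)$, giving a bijection $\chi\leftrightarrow\tilde\chi$. The generic degrees $d_\chi(q)$, $\chi\in\operatorname{Irr}(W)$, are the unique elements satisfying $\sum_{\chi\in\operatorname{Irr}(W)}\tilde\chi(T_w)d_\chi(q)=P(q)$ if $w=e$ and $=0$ if $w\neq e$. *)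

From HB Require Import structures.
From mathcomp Require Import all_boot all_order all_algebra all_fingroup all_solvable all_field all_character.
Set Implicit Arguments. Unset Strict Implicit. Unset Printing Implicit Defensive.
Import Order.TTheory GRing.Theory Num.Theory.
Local Open Scope ring_scope.

(* K = algC (an algebraically closed subfield of C, hence a
   splitting field for W).  sqrt q is the indeterminate 'X of {poly algC};
   the field K(sqrt q) is {fraction {poly algC}}. *)

Definition Lq : fieldType := {fraction {poly algC}}.

Definition toL (p : {poly algC}) : Lq := FracField.tofrac p.

Definition cst (c : algC) : Lq := toL (c%:P).

Definition qL : Lq := toL ('X ^+ 2)%R.

(* Coxeter system (W,S): S a set of involutions generating W, satisfying the
   universal property of the Coxeter presentation  <S | (st)^{m(s,t)} = 1>
   with m(s,t) = order of st in W, tested against all finite groups. *)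
Definition coxeter_system (gT : finGroupType) (W : {group gT}) (S : {set gT}) : Prop :=
  [/\ S \subset W, (1%g \notin S),
      (forall s, s \in S -> (s * s)%g = 1%g),
      <<S>>%g = W &
      forall (hT : finGroupType) (f : gT -> hT),
        (forall s t, s \in S -> t \in S -> ((f s * f t) ^+ #[(s * t)%g])%g = 1%g) ->
        exists phi : {morphism W >-> hT}, forall s, s \in S -> phi s = f s].

(* length function w.r.t. S: least n such that w is a product of n elements
   of S (every element of W = <<S>> has a reduced word of length < #|gT|). *)
Definition coxlen (gT : finGroupType) (S : {set gT}) (w : gT) : nat :=
  find (fun n => [exists t : n.-tuple gT,
                   all (mem S) t && ((\prod_(s <- t) s)%g == w)])
       (iota 0 #|gT|.+1).

Definition poincare (gT : finGroupType) (W : {group gT}) (S : {set gT}) : Lq :=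
  (\sum_(w in W) qL ^+ coxlen S w)%R.

(* A (unital, matrix) representation of the Hecke algebra H over K(sqrt q):
   rho w is the image of T_w.  Since (T_w) is a basis of H, an algebra
   homomorphism H -> M_n(L) is exactly such a family satisfying the
   defining relations. *)
Definition hecke_rep (gT : finGroupType) (W : {group gT}) (S : {set gT})
    (n : nat) (rho : gT -> 'M[Lq]_n) : Prop :=
  [/\ rho 1%g = 1%:M,
      (forall s, s \in S -> rho s *m rho s = qL *: 1%:M + (qL - 1) *: rho s)%R &
      (forall x y, x \in W -> y \in W ->
         coxlen S x + coxlen S y = coxlen S (x * y)%g ->
         rho x *m rho y = rho (x * y)%g)].

Definition hecke_irr (gT : finGroupType) (W : {group gT})
    (n : nat) (rho : gT -> 'M[Lq]_n) : Prop :=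
  (0 < n)%N /\
  forall U : 'M[Lq]_n, (forall w, w \in W -> (U *m rho w <= U)%MS) ->
     U = 0 \/ row_full U.

From HB Require Import structures.
From mathcomp Require Import all_boot all_order all_algebra all_fingroup all_solvable all_field all_character.
From mathcomp Require Import ring.
Set Implicit Arguments. Unset Strict Implicit. Unset Printing Implicit Defensive.
Import Order.TTheory GRing.Theory Num.Theory.
Local Open Scope ring_scope.

(* T_s satisfies (T_s - q)(T_s + 1) = 0, so in any representation of
   dimension n it acts diagonalisably with eigenvalues q and -1, and its trace
   is (1 + q) r - n for some integer r.  Specialising sqrt q to 1 gives
   chi(s) = 2 r - n, hence 2 tr(T_s) = (1 + q)(chi(s) + n) - 2 n.  Summing
   against the generic degrees, the orthogonality relation at w = s gives
   0 = (1 + q) g_s + (q - 1) g_e, and at w = e it gives g_e = P. *)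

Lemma mxtrace_idempotent (F : fieldType) n (E : 'M[F]_n) :
  E *m E = E -> \tr E = (\rank E)%:R.
Proof.
move=> EE.
have base_inv : row_base E *m col_base E = 1%:M.
  apply: (row_free_inj (row_base_free E)); apply: (row_full_inj (col_base_full E)).
  move: (mulmx_base E); move: (col_base E) (row_base E) => C R CR.
  by rewrite mul1mx !mulmxA CR -mulmxA CR.
by rewrite -{1}(mulmx_base E) mxtrace_mulC base_inv mxtrace1.
Qed.

(* (A - b) / (a - b) is the projection onto the a-eigenspace. *)
Lemma mxtrace_split_quadratic (F : fieldType) n (A : 'M[F]_n) (a b : F) :
  (A - a%:M) *m (A - b%:M) = 0 -> a != b ->
  exists r : nat, \tr A = r%:R * (a - b) + n%:R * b.
Proof.
move=> Aab ab; have ab0 : a - b != 0 by rewrite subr_eq0.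
have Abb : (A - b%:M) *m (A - b%:M) = (a - b) *: (A - b%:M).
  have Aa : A - a%:M = (A - b%:M) - (a - b)%:M by rewrite raddfB /= opprB addrA subrK.
  by move: Aab; rewrite Aa mulmxBl mul_scalar_mx => /eqP; rewrite subr_eq0 => /eqP.
set E := (a - b)^-1 *: (A - b%:M).
have EE : E *m E = E.
  by rewrite /E -scalemxAl -scalemxAr Abb !scalerA -mulrA mulVf // mulr1.
exists (\rank E).
rewrite -mxtrace_idempotent // /E mxtraceZ mulrC mulrA mulfV // mul1r.
by rewrite mxtraceD raddfN /= mxtrace_scalar mulr_natl subrK.
Qed.

Lemma toL_inj : injective toL.
Proof. by move=> p r /eqP; rewrite tofrac_eq => /eqP. Qed.

Lemma qL_neq_m1 : qL != -1.
Proof.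
rewrite -subr_eq0 opprK /qL /toL -[1]/(toL 1) -rmorphD tofrac_eq0.
apply/negP => /eqP/(congr1 (horner^~ 0)).
by rewrite !hornerE expr0n /= add0r => /eqP; rewrite oner_eq0.
Qed.

Lemma cst_nat_eval1 (p : {poly algC}) (m : nat) : toL p = m%:R -> cst p.[1] = m%:R.
Proof.
move=> trp; have -> : p = m%:R by apply: toL_inj; rewrite trp /toL rmorph_nat.
by rewrite hornerMn hornerC /cst /toL !rmorph_nat.
Qed.

(* Specialising sqrt q to 1 turns the integer r of mxtrace_split_quadratic
   into (chi(s) + n) / 2. *)
Lemma mxtrace_hecke_generator n (A : 'M[Lq]_n) (p : {poly algC}) :
  A *m A = qL *: 1%:M + (qL - 1) *: A -> \tr A = toL p ->
  2%:R * \tr A = (1 + qL) * (cst p.[1] + n%:R) - 2%:R * n%:R.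
Proof.
move=> AA trA.
have factor : (A - qL%:M) *m (A - (-1)%:M) = 0.
  rewrite raddfN /= opprK mulmxBl mulmxDr mulmx1 AA mul_scalar_mx.
  by rewrite scalerDr scalerBl scale1r scalemx1 addrA subrK [qL%:M + _]addrC subrr.
have [r tr_r] := mxtrace_split_quadratic factor qL_neq_m1.
have -> : p = r%:R * ('X^2 - -1) + n%:R * -1.
  apply: toL_inj; rewrite -trA tr_r /qL /toL.
  by rewrite !(rmorphD, rmorphM, rmorphB, rmorphN, rmorph1, rmorph_nat).
rewrite tr_r /cst /toL !hornerE !hornerMn hornerC expr1n.
rewrite !(rmorphD, rmorphM, rmorphB, rmorphN, rmorph1, rmorph_nat).
ring.
Qed.

Section GenericDegrees.

Variables (gT : finGroupType) (W : {group gT}) (S : {set gT}).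
Variables (n : Iirr W -> nat) (rho : forall i : Iirr W, gT -> 'M[Lq]_(n i)).
Variable d : Iirr W -> Lq.

Hypothesis rho_hecke : forall i, hecke_rep W S (rho i).
Hypothesis rho_specialises : forall i w, w \in W ->
  exists p : {poly algC}, \tr (rho i w) = toL p /\ p.[1] = 'chi[W]_i w.
Hypothesis d_generic : forall w, w \in W ->
  \sum_i \tr (rho i w) * d i = if w == 1%g then poincare W S else 0.

Lemma mxtrace_hecke1 i : \tr (rho i 1%g) = (n i)%:R.
Proof. by case: (rho_hecke i) => -> _ _; rewrite mxtrace1. Qed.

Lemma cst_irr1 i : cst ('chi[W]_i 1%g) = (n i)%:R.
Proof.
have [p [trp <-]] := rho_specialises i (group1 W).
by apply: cst_nat_eval1; rewrite -trp mxtrace_hecke1.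
Qed.

Lemma sum_dim_generic_degrees : \sum_i (n i)%:R * d i = poincare W S.
Proof.
have := d_generic (group1 W); rewrite eqxx => <-.
by apply: eq_bigr => i _; rewrite mxtrace_hecke1.
Qed.

Lemma sum_irr1_generic_degrees : \sum_i cst ('chi[W]_i 1%g) * d i = poincare W S.
Proof.
by rewrite -sum_dim_generic_degrees; apply: eq_bigr => i _; rewrite cst_irr1.
Qed.

Lemma sum_irr_generator_generic_degrees s : s \in S -> s \in W -> s != 1%g ->
  \sum_i cst ('chi[W]_i s) * d i = (1 - qL) * poincare W S / (1 + qL).
Proof.
move=> sS sW s_neq1.
have trace_s i : 2%:R * \tr (rho i s) =
    (1 + qL) * (cst ('chi[W]_i s) + (n i)%:R) - 2%:R * (n i)%:R.
  have [p [trp <-]] := rho_specialises i sW.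
  by apply: mxtrace_hecke_generator trp; case: (rho_hecke i) => _ /(_ s sS).
have orth_s : (1 + qL) * \sum_i cst ('chi[W]_i s) * d i
              + (qL - 1) * poincare W S = 0.
  rewrite -sum_dim_generic_degrees !mulr_sumr -big_split /=.
  have trace_sum : \sum_i \tr (rho i s) * d i = 0 by rewrite d_generic // (negbTE s_neq1).
  rewrite -[RHS](mulr0 2%:R) -[in RHS]trace_sum mulr_sumr.
  by apply: eq_bigr => i _; rewrite [RHS]mulrA trace_s; ring.
have q1_neq0 : 1 + qL != 0 by rewrite addrC addr_eq0 qL_neq_m1.
apply: (mulfI q1_neq0); rewrite [RHS]mulrC divfK //.
by move/eqP: orth_s; rewrite addr_eq0 => /eqP ->; ring.
Qed.

End GenericDegrees.

Theorem corollary1p2 (gT : finGroupType) (W : {group gT}) (S : {set gT})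
  (n : Iirr W -> nat) (rho : forall i : Iirr W, gT -> 'M[Lq]_(n i))
  (d : Iirr W -> Lq) :
  coxeter_system W S ->
  (* the irreducible representations of H, indexed by Irr(W) via specialization *)
  (forall i, hecke_rep W S (rho i)) ->
  (forall i, hecke_irr W (rho i)) ->
  (forall i w, w \in W -> exists p : {poly algC},
      \tr (rho i w) = toL p /\ p.[1] = 'chi[W]_i w)%R ->
  (* d are the generic degrees *)
  (forall w, w \in W ->
     (\sum_i \tr (rho i w) * d i)%R = (if w == 1%g then poincare W S else 0%R)) ->
  (\sum_i cst ('chi[W]_i 1%g) * d i)%R = poincare W S /\
  (forall s, s \in S ->
     (\sum_i cst ('chi[W]_i s) * d i)%R = ((1 - qL) * poincare W S / (1 + qL))%R).
Proof.
move=> [SW S1 _ _ _] rho_hecke _ rho_spec d_generic.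
split; first exact: sum_irr1_generic_degrees rho_hecke rho_spec d_generic.
move=> s sS; apply: (sum_irr_generator_generic_degrees rho_hecke rho_spec d_generic sS).
- exact: subsetP SW s sS.
- by apply: contraNneq S1 => <-.
Qed.
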